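(* Let $f$ be a ternary cubic form with $f_{333}\neq0$, $\Delta_{333}\neq0$ and $f_{133}=f_{233}=0$. Then $f$ is completely reducible (a product of three linear forms) if and only if $$f_{113}(4f_{113}f_{223}-f_{123}^2)+3(f_{112}^2-3f_{111}f_{122})f_{333}=0,$$ $$f_{123}(4f_{113}f_{223}-f_{123}^2)+3(f_{112}f_{122}-9f_{111}f_{222})f_{333}=0,$$ $$f_{223}(4f_{113}f_{223}-f_{123}^2)+3(f_{122}^2-3f_{112}f_{222})f_{333}=0.$$
   Context: A ternary cubic form is written $f=\sum_{1\le i\le j\le k\le3}f_{ijk}x_ix_jx_k$ with complex coefficients; $\Delta_{ijk}$ denotes the coefficient of $x_ix_jx_k$ in the Hessian $\Delta=\tfrac12\det(\partial^2f/\partial x_i\partial x_j)$. *)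

From mathcomp Require Import all_boot all_algebra.
From mathcomp Require Import reals.
From mathcomp.real_closed Require Export complex.
From mathcomp.multinomials Require Export mpoly.
Set Implicit Arguments. Unset Strict Implicit. Unset Printing Implicit Defensive.
Import GRing.Theory Num.Theory.
Local Open Scope ring_scope.

(* Variables x_1, x_2, x_3 are 'X_0, 'X_1, 'X_2 (indices shifted by one). *)

Definition cf3 (C : comRingType) (p : {mpoly C[3]}) (i j k : 'I_3) : C :=
  p@_(U_(i) + U_(j) + U_(k))%MM.

Definition hessian3 (C : fieldType) (f : {mpoly C[3]}) : {mpoly C[3]} :=
  (2%:R : C)^-1 *: \det (\matrix_(i < 3, j < 3) mderiv i (mderiv j f)).

Definition ternary_cubic_form (C : comRingType) (f : {mpoly C[3]}) : Prop :=
  f \is 3.-homog.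

Definition completely_reducible (C : comRingType) (f : {mpoly C[3]}) : Prop :=
  exists l1 l2 l3 : {mpoly C[3]},
    [/\ l1 \is 1.-homog, l2 \is 1.-homog, l3 \is 1.-homog & f = l1 * l2 * l3].

Definition i1 : 'I_3 := @Ordinal 3 0 isT.
Definition i2 : 'I_3 := @Ordinal 3 1 isT.
Definition i3 : 'I_3 := @Ordinal 3 2 isT.

From mathcomp Require Import all_boot all_algebra.
From mathcomp Require Import reals.
From mathcomp.real_closed Require Import complex.
From mathcomp.multinomials Require Import mpoly.
From mathcomp Require Import ring.
Set Implicit Arguments. Unset Strict Implicit. Unset Printing Implicit Defensive.
Import GRing.Theory Num.Theory.
Local Open Scope ring_scope.

(* Reducibility of a ternary cubic with f_133 = f_233 = 0.
   Write a = f_333, q = f_113 x_1^2 + f_123 x_1 x_2 + f_223 x_2^2 and let c be the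
   binary cubic part, so f = a x_3^3 + x_3 q + c, and D = 4 f_113 f_223 - f_123^2.
   - Linear forms are handled through their coordinate vectors: the coefficients
     of a product of three linear forms are explicit trilinear sums
     (cubic_coef), and every degree-3 monomial is one of ten (cubic_mnm_ind).
   - Expanding the 3x3 determinant gives Delta_333 = 3 a D (hessian333), so the
     hypothesis Delta_333 != 0 means D != 0, i.e. q splits as -3a U V with
     independent linear forms U, V in x_1, x_2.
   - Necessity: for f = l_1 l_2 l_3 the conditions are polynomial identities in
     the coordinates of the l_k once f_133 = f_233 = 0 is used.
   - Sufficiency: writing c = a (A U^3 + B U^2 V + Cc U V^2 + E V^3), the three
     conditions become B^2 = 3 A Cc, Cc^2 = 3 B E, B Cc - 9 A E + 9 = 0, whose
     solutions have B = Cc = 0, A E = 1; rescaling U, V by a cube root of A gives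
     f = a (x_3^3 - 3 x_3 U V + U^3 + V^3), which factors with the cube roots of
     unity. *)

Lemma sum_ord3 (V : nmodType) (F : 'I_3 -> V) :
  \sum_(j < 3) F j = F i1 + F i2 + F i3.
Proof.
rewrite !big_ord_recr big_ord0 /= add0r.
by congr (F _ + F _ + F _); apply: val_inj.
Qed.

Lemma mnm3_eqE (m1 m2 : 'X_{1..3}) :
  (m1 == m2) = [&& m1 i1 == m2 i1, m1 i2 == m2 i2 & m1 i3 == m2 i3].
Proof.
apply/eqP/and3P => [->|[/eqP e1 /eqP e2 /eqP e3]]; first by rewrite !eqxx.
apply/mnmP => -[[|[|[|//]]] lt_i3].
- by have -> : Ordinal lt_i3 = i1 by apply: val_inj.
- by have -> : Ordinal lt_i3 = i2 by apply: val_inj.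
- by have -> : Ordinal lt_i3 = i3 by apply: val_inj.
Qed.

Definition occurrences (a b c i : 'I_3) : nat := ((a == i) + (b == i) + (c == i))%N.

Lemma cubic_mnmE (a b c i : 'I_3) :
  (U_(a) + U_(b) + U_(c))%MM i = occurrences a b c i.
Proof. by rewrite !mnmDE !mnm1E. Qed.

Lemma cubic_mnm_eq (a b c a' b' c' : 'I_3) :
  occurrences a b c i1 = occurrences a' b' c' i1 ->
  occurrences a b c i2 = occurrences a' b' c' i2 ->
  occurrences a b c i3 = occurrences a' b' c' i3 ->
  (U_(a) + U_(b) + U_(c) = U_(a') + U_(b') + U_(c'))%MM.
Proof.
by move=> e1 e2 e3; apply/eqP; rewrite mnm3_eqE !cubic_mnmE e1 e2 e3 !eqxx.
Qed.

Lemma cubic_mnm_ind (P : 'X_{1..3} -> Prop) :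
  P (U_(i1) + U_(i1) + U_(i1))%MM -> P (U_(i1) + U_(i1) + U_(i2))%MM ->
  P (U_(i1) + U_(i1) + U_(i3))%MM -> P (U_(i1) + U_(i2) + U_(i2))%MM ->
  P (U_(i1) + U_(i2) + U_(i3))%MM -> P (U_(i1) + U_(i3) + U_(i3))%MM ->
  P (U_(i2) + U_(i2) + U_(i2))%MM -> P (U_(i2) + U_(i2) + U_(i3))%MM ->
  P (U_(i2) + U_(i3) + U_(i3))%MM -> P (U_(i3) + U_(i3) + U_(i3))%MM ->
  forall m, mdeg m = 3%N -> P m.
Proof.
move=> P111 P112 P113 P122 P123 P133 P222 P223 P233 P333 m.
have mE a b c : occurrences a b c i1 = m i1 -> occurrences a b c i2 = m i2 ->
    occurrences a b c i3 = m i3 -> m = (U_(a) + U_(b) + U_(c))%MM.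
  by move=> e1 e2 e3; apply/eqP; rewrite mnm3_eqE !cubic_mnmE e1 e2 e3 !eqxx.
rewrite mdegE sum_ord3.
case E1: (m i1) => [|[|[|[|?]]]]; case E2: (m i2) => [|[|[|[|?]]]];
  case E3: (m i3) => [|[|[|[|?]]]] => // _;
  first [ by rewrite (mE i1 i1 i1) ?E1 ?E2 ?E3 | by rewrite (mE i1 i1 i2) ?E1 ?E2 ?E3
        | by rewrite (mE i1 i1 i3) ?E1 ?E2 ?E3 | by rewrite (mE i1 i2 i2) ?E1 ?E2 ?E3
        | by rewrite (mE i1 i2 i3) ?E1 ?E2 ?E3 | by rewrite (mE i1 i3 i3) ?E1 ?E2 ?E3
        | by rewrite (mE i2 i2 i2) ?E1 ?E2 ?E3 | by rewrite (mE i2 i2 i3) ?E1 ?E2 ?E3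
        | by rewrite (mE i2 i3 i3) ?E1 ?E2 ?E3 | by rewrite (mE i3 i3 i3) ?E1 ?E2 ?E3 ].
Qed.

Section LinearForms.
Variable C : comNzRingType.
Implicit Types (u v w : 'I_3 -> C) (p : {mpoly C[3]}).

Definition linear_form u : {mpoly C[3]} := \sum_(j < 3) u j *: 'X_j.

Lemma linear_form_homog u : linear_form u \is 1.-homog.
Proof.
by apply: rpred_sum => j _; apply: rpredZ; rewrite dhomogX /= mdeg1.
Qed.

Lemma mcoeff_linear_form u m :
  (linear_form u)@_m = \sum_(a < 3) u a * ((U_(a))%MM == m)%:R.
Proof. by rewrite raddf_sum /=; apply: eq_bigr => a _; rewrite mcoeffZ mcoeffX. Qed.

Lemma linear_formE p :
  (forall m, mdeg m != 1%N -> p@_m = 0) -> p = linear_form (fun k => p@_U_(k)).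
Proof.
move=> p_deg1; apply/mpolyP => m; rewrite mcoeff_linear_form.
have [/mdeg1P [i /eqP ->]|m_deg] := boolP (mdeg m == 1%N).
  rewrite (bigD1 i) //= eqxx mulr1 big1 ?addr0 // => j ji.
  case: eqP => [e|]; last by rewrite mulr0.
  have := congr1 (fun m : 'X_{1..3} => m j) e; rewrite !mnm1E eqxx.
  by rewrite eq_sym (negbTE ji).
rewrite p_deg1 // big1 // => a _; case: eqP => [e|]; last by rewrite mulr0.
by rewrite -e mdeg1 in m_deg.
Qed.

Lemma homog1_linear_form p : p \is 1.-homog -> exists u, p = linear_form u.
Proof.
by move=> p_homog; eexists; apply: linear_formE => m; apply: dhomog_nemf_coeff.
Qed.

Definition cubic_coef u v w (m : 'X_{1..3}) : C :=
  \sum_(a < 3) \sum_(b < 3) \sum_(c < 3)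
     u a * v b * w c * ((U_(a) + U_(b) + U_(c))%MM == m)%:R.

Lemma linear_form_mul3 u v w :
  linear_form u * linear_form v * linear_form w =
  \sum_(a < 3) \sum_(b < 3) \sum_(c < 3)
     (u a * v b * w c) *: 'X_[(U_(a) + U_(b) + U_(c))%MM].
Proof.
have mul2 : linear_form u * linear_form v =
    \sum_(a < 3) \sum_(b < 3) (u a * v b) *: 'X_[(U_(a) + U_(b))%MM].
  rewrite (@mulr_suml {mpoly C[3]}); apply: eq_bigr => a _.
  rewrite (@mulr_sumr {mpoly C[3]}); apply: eq_bigr => b _.
  by rewrite -!scalerAl -!scalerAr !scalerA !mpolyXD.
rewrite mul2 (@mulr_suml {mpoly C[3]}); apply: eq_bigr => a _.
rewrite (@mulr_suml {mpoly C[3]}); apply: eq_bigr => b _.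
rewrite (@mulr_sumr {mpoly C[3]}); apply: eq_bigr => c _.
by rewrite -!scalerAl -!scalerAr !scalerA !mpolyXD.
Qed.

Lemma mcoeff_linear_form_mul3 u v w m :
  (linear_form u * linear_form v * linear_form w)@_m = cubic_coef u v w m.
Proof.
rewrite linear_form_mul3 raddf_sum /=; apply: eq_bigr => a _.
rewrite raddf_sum /=; apply: eq_bigr => b _.
rewrite raddf_sum /=; apply: eq_bigr => c _.
by rewrite mcoeffZ mcoeffX.
Qed.
End LinearForms.

Section CubicCoefficients.
Variable C : comNzRingType.
Implicit Types (u v w : 'I_3 -> C).

Lemma cubic_coefE u v w m : cubic_coef u v w m =
  \sum_(a < 3) \sum_(b < 3) \sum_(c < 3) u a * v b * w c *
    ([&& occurrences a b c i1 == m i1, occurrences a b c i2 == m i2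
       & occurrences a b c i3 == m i3])%:R.
Proof.
apply: eq_bigr => a _; apply: eq_bigr => b _; apply: eq_bigr => c _.
by rewrite mnm3_eqE !cubic_mnmE.
Qed.

Lemma cubic_coef_ndeg u v w m : mdeg m != 3%N -> cubic_coef u v w m = 0.
Proof.
move=> m_deg; apply: big1 => a _; apply: big1 => b _; apply: big1 => c _.
case: eqP => [e|]; last by rewrite mulr0.
by rewrite -e !mdegD !mdeg1 in m_deg.
Qed.

Lemma cubic_coef333 u v w :
  cubic_coef u v w (U_(i3) + U_(i3) + U_(i3))%MM = u i3 * v i3 * w i3.
Proof. by rewrite cubic_coefE !cubic_mnmE !sum_ord3 /= ?mulr1 ?mulr0 ?addr0 ?add0r. Qed.

Lemma mcoeff333_mul3 (p q r : {mpoly C[3]}) :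
  (forall m, mdeg m != 1%N -> p@_m = 0) ->
  (forall m, mdeg m != 1%N -> q@_m = 0) ->
  (forall m, mdeg m != 1%N -> r@_m = 0) ->
  (p * q * r)@_(U_(i3) + U_(i3) + U_(i3))%MM = p@_U_(i3) * q@_U_(i3) * r@_U_(i3).
Proof.
move=> /linear_formE {1}-> /linear_formE {1}-> /linear_formE {1}->.
by rewrite mcoeff_linear_form_mul3 cubic_coef333.
Qed.

Lemma det3E (A : 'M[C]_3) : \det A =
  A i1 i1 * (A i2 i2 * A i3 i3 - A i2 i3 * A i3 i2)
  - A i1 i2 * (A i2 i1 * A i3 i3 - A i2 i3 * A i3 i1)
  + A i1 i3 * (A i2 i1 * A i3 i2 - A i2 i2 * A i3 i1).
Proof.
pose norm3 (x : 'I_3) := if val x == 0%N then i1 else if val x == 1%N then i2 else i3.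
have norm3K x : norm3 x = x by case: x => [[|[|[|]]] ?] //=; apply: val_inj.
have AE x y : A x y = A (norm3 x) (norm3 y) by rewrite !norm3K.
rewrite (expand_det_row _ i1) sum_ord3 /cofactor.
rewrite !(expand_det_row _ ord0) !big_ord_recr !big_ord0 /cofactor !det_mx11 !mxE.
rewrite !(AE (lift _ _) (lift _ _)) /norm3 /= !add0n; ring.
Qed.
End CubicCoefficients.

Section Hessian.
Variable C : numFieldType.

Lemma mderiv2_cubic_deg1 (f : {mpoly C[3]}) x y : f \is 3.-homog ->
  forall m, mdeg m != 1%N -> (mderiv x (mderiv y f))@_m = 0.
Proof.
move=> f_homog m m_deg; rewrite !mcoeff_deriv (dhomog_nemf_coeff f_homog) ?mul0rn //.
change (mdeg (m + U_(x) + U_(y))%MM != 3%N).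
rewrite !mdegD !mdeg1 !addn1.
by move: m_deg; case: (mdeg m) => [|[|]].
Qed.

Lemma hessian333 (f : {mpoly C[3]}) : f \is 3.-homog ->
  cf3 f i1 i3 i3 = 0 -> cf3 f i2 i3 i3 = 0 ->
  cf3 (hessian3 f) i3 i3 i3 = 3%:R * cf3 f i3 i3 i3 *
     (4%:R * cf3 f i1 i1 i3 * cf3 f i2 i2 i3 - cf3 f i1 i2 i3 ^+ 2).
Proof.
move=> f_homog; rewrite /cf3 /hessian3 mcoeffZ det3E !mxE.
rewrite !mulrBr !mulrA !(raddfB, raddfD) /=.
have d2f x y := mderiv2_cubic_deg1 x y f_homog.
rewrite !(mcoeff333_mul3 (d2f _ _) (d2f _ _) (d2f _ _)).
rewrite !mcoeff_deriv !mnmDE !mnm1E /=.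
rewrite (@cubic_mnm_eq i3 i1 i1 i1 i1 i3) // (@cubic_mnm_eq i3 i2 i2 i2 i2 i3) //.
rewrite (@cubic_mnm_eq i3 i2 i3 i2 i3 i3) // (@cubic_mnm_eq i3 i3 i2 i2 i3 i3) //.
rewrite (@cubic_mnm_eq i3 i1 i2 i1 i2 i3) // (@cubic_mnm_eq i3 i2 i1 i1 i2 i3) //.
rewrite (@cubic_mnm_eq i3 i3 i1 i1 i3 i3) // (@cubic_mnm_eq i3 i1 i3 i1 i3 i3) //.
move=> -> ->; field; by [].
Qed.
End Hessian.

Definition reducibility_conditions (C : comNzRingType) (f : {mpoly C[3]}) : Prop :=
  let f' := cf3 f in
  let D := 4%:R * f' i1 i1 i3 * f' i2 i2 i3 - f' i1 i2 i3 ^+ 2 in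
  [/\ f' i1 i1 i3 * D
        + 3%:R * (f' i1 i1 i2 ^+ 2 - 3%:R * f' i1 i1 i1 * f' i1 i2 i2) * f' i3 i3 i3 = 0,
      f' i1 i2 i3 * D
        + 3%:R * (f' i1 i1 i2 * f' i1 i2 i2 - 9%:R * f' i1 i1 i1 * f' i2 i2 i2)
          * f' i3 i3 i3 = 0 &
      f' i2 i2 i3 * D
        + 3%:R * (f' i1 i2 i2 ^+ 2 - 3%:R * f' i1 i1 i2 * f' i2 i2 i2) * f' i3 i3 i3 = 0].

(* Normalising each factor to
   x_3 + a_k x_1 + b_k x_2, the hypotheses say sum a_k = sum b_k = 0 and the
   conditions become polynomial identities. *)
Lemma product_reducibility_conditions (C : fieldType) (u v w : 'I_3 -> C) :
  let f := linear_form u * linear_form v * linear_form w in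
  cf3 f i3 i3 i3 != 0 -> cf3 f i1 i3 i3 = 0 -> cf3 f i2 i3 i3 = 0 ->
  reducibility_conditions f.
Proof.
rewrite /reducibility_conditions /cf3 !mcoeff_linear_form_mul3 !cubic_coefE.
rewrite !cubic_mnmE !sum_ord3 /= ?mulr1 ?mulr0 ?addr0 ?add0r.
move: (u i1) (u i2) (u i3) (v i1) (v i2) (v i3) (w i1) (w i2) (w i3).
move=> u1 u2 u3 v1 v2 v3 w1 w2 w3 nz333 f133 f233.
have [u3_0 v3_0 w3_0] : [/\ u3 != 0, v3 != 0 & w3 != 0].
  by move: nz333; rewrite !mulf_eq0 !negb_or => /andP[/andP[-> ->] ->].
have [a1 ea1] : exists a1, u1 = a1 * u3 by exists (u1 / u3); rewrite mulfVK.
have [b1 eb1] : exists b1, u2 = b1 * u3 by exists (u2 / u3); rewrite mulfVK.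
have [a2 ea2] : exists a2, v1 = a2 * v3 by exists (v1 / v3); rewrite mulfVK.
have [b2 eb2] : exists b2, v2 = b2 * v3 by exists (v2 / v3); rewrite mulfVK.
have [a3 ea3] : exists a3, w1 = a3 * w3 by exists (w1 / w3); rewrite mulfVK.
have [b3 eb3] : exists b3, w2 = b3 * w3 by exists (w2 / w3); rewrite mulfVK.
subst u1 u2 v1 v2 w1 w2.
have sum_a : a1 + a2 + a3 = 0.
  by apply: (mulfI nz333); rewrite mulr0 -f133; ring.
have sum_b : b1 + b2 + b3 = 0.
  by apply: (mulfI nz333); rewrite mulr0 -f233; ring.
have -> : a3 = - a1 - a2 by apply/eqP; rewrite -subr_eq0 -sum_a; apply/eqP; ring.
have -> : b3 = - b1 - b2 by apply/eqP; rewrite -subr_eq0 -sum_b; apply/eqP; ring.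
by split; ring.
Qed.

Section QuadraticPart.
Variable C : numClosedFieldType.

Lemma quadratic_form_split (p q r : C) :
  exists u1 u2 v1 v2 : C, [/\ u1 * v1 = p, u1 * v2 + u2 * v1 = q & u2 * v2 = r].
Proof.
have [->|p0] := eqVneq p 0; first by exists 0, 1, q, r; split; ring.
pose de := sqrtC (q ^+ 2 - 4%:R * p * r).
have de2 : de ^+ 2 = q ^+ 2 - 4%:R * p * r by rewrite sqrtCK.
exists p, ((q + de) / 2%:R), 1, ((q - de) / (2%:R * p)); split.
- by rewrite mulr1.
- by field; rewrite ?p0 ?pnatr_eq0.
- have -> : (q + de) / 2%:R * ((q - de) / (2%:R * p)) = (q ^+ 2 - de ^+ 2) / (4%:R * p).
    by field; rewrite ?p0 ?pnatr_eq0.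
  by rewrite de2; field; rewrite ?p0 ?pnatr_eq0.
Qed.

Lemma quadratic_part_split (a al be ga : C) : a != 0 ->
  4%:R * al * ga - be ^+ 2 != 0 ->
  exists u1 u2 v1 v2 : C,
   [/\ al = - 3%:R * a * (u1 * v1), be = - 3%:R * a * (u1 * v2 + u2 * v1),
       ga = - 3%:R * a * (u2 * v2) & u1 * v2 - u2 * v1 != 0].
Proof.
move=> a0 disc0.
have [u1 [u2 [v1 [v2 [e1 e2 e3]]]]] :=
  quadratic_form_split (- al / (3%:R * a)) (- be / (3%:R * a)) (- ga / (3%:R * a)).
have eal : al = - 3%:R * a * (u1 * v1) by rewrite e1; field; rewrite ?a0 ?pnatr_eq0.
have ebe : be = - 3%:R * a * (u1 * v2 + u2 * v1) by rewrite e2; field; rewrite ?a0 ?pnatr_eq0.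
have ega : ga = - 3%:R * a * (u2 * v2) by rewrite e3; field; rewrite ?a0 ?pnatr_eq0.
exists u1, u2, v1, v2; split => //.
have discE : 4%:R * al * ga - be ^+ 2 = - 9%:R * a ^+ 2 * (u1 * v2 - u2 * v1) ^+ 2.
  by rewrite eal ebe ega; ring.
by apply: contra disc0; rewrite discE => /eqP ->; rewrite expr0n /= mulr0.
Qed.
End QuadraticPart.

Section CubicPart.
Variable C : numFieldType.

Lemma binary_cubic_in_basis (a u1 u2 v1 v2 c0 c1 c2 c3 : C) :
  a != 0 -> u1 * v2 - u2 * v1 != 0 ->
  exists A B Cc E : C,
  [/\ c0 = a * (A * u1 ^+ 3 + B * u1 ^+ 2 * v1 + Cc * u1 * v1 ^+ 2 + E * v1 ^+ 3),
   c1 = a * (3%:R * A * u1 ^+ 2 * u2 + B * (u1 ^+ 2 * v2 + 2%:R * u1 * u2 * v1)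
             + Cc * (u2 * v1 ^+ 2 + 2%:R * u1 * v1 * v2) + 3%:R * E * v1 ^+ 2 * v2),
   c2 = a * (3%:R * A * u1 * u2 ^+ 2 + B * (2%:R * u1 * u2 * v2 + u2 ^+ 2 * v1)
             + Cc * (u1 * v2 ^+ 2 + 2%:R * u2 * v1 * v2) + 3%:R * E * v1 * v2 ^+ 2) &
   c3 = a * (A * u2 ^+ 3 + B * u2 ^+ 2 * v2 + Cc * u2 * v2 ^+ 2 + E * v2 ^+ 3)].
Proof.
move=> a0 d0; pose k := a * (u1 * v2 - u2 * v1) ^+ 3.
exists ((c0 * v2 ^+ 3 - c1 * v2 ^+ 2 * v1 + c2 * v2 * v1 ^+ 2 - c3 * v1 ^+ 3) / k).
exists ((- 3%:R * c0 * v2 ^+ 2 * u2 + c1 * (v2 ^+ 2 * u1 + 2%:R * u2 * v1 * v2)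
        + c2 * (- u2 * v1 ^+ 2 - 2%:R * u1 * v1 * v2) + 3%:R * c3 * v1 ^+ 2 * u1) / k).
exists ((3%:R * c0 * v2 * u2 ^+ 2 + c1 * (- u2 ^+ 2 * v1 - 2%:R * u1 * u2 * v2)
        + c2 * (v2 * u1 ^+ 2 + 2%:R * u1 * u2 * v1) - 3%:R * c3 * v1 * u1 ^+ 2) / k).
exists ((- c0 * u2 ^+ 3 + c1 * u2 ^+ 2 * u1 - c2 * u2 * u1 ^+ 2 + c3 * u1 ^+ 3) / k).
by rewrite /k; split; field; rewrite ?a0 ?d0.
Qed.

Lemma conditions_in_basis (a u1 u2 v1 v2 A B Cc E : C) :
  let al := - 3%:R * a * (u1 * v1) in
  let be := - 3%:R * a * (u1 * v2 + u2 * v1) in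
  let ga := - 3%:R * a * (u2 * v2) in
  let D := 4%:R * al * ga - be ^+ 2 in
  let c0 := a * (A * u1 ^+ 3 + B * u1 ^+ 2 * v1 + Cc * u1 * v1 ^+ 2 + E * v1 ^+ 3) in
  let c1 := a * (3%:R * A * u1 ^+ 2 * u2 + B * (u1 ^+ 2 * v2 + 2%:R * u1 * u2 * v1)
             + Cc * (u2 * v1 ^+ 2 + 2%:R * u1 * v1 * v2) + 3%:R * E * v1 ^+ 2 * v2) in
  let c2 := a * (3%:R * A * u1 * u2 ^+ 2 + B * (2%:R * u1 * u2 * v2 + u2 ^+ 2 * v1)
             + Cc * (u1 * v2 ^+ 2 + 2%:R * u2 * v1 * v2) + 3%:R * E * v1 * v2 ^+ 2) in
  let c3 := a * (A * u2 ^+ 3 + B * u2 ^+ 2 * v2 + Cc * u2 * v2 ^+ 2 + E * v2 ^+ 3) in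
  a != 0 -> u1 * v2 - u2 * v1 != 0 ->
  al * D + 3%:R * (c1 ^+ 2 - 3%:R * c0 * c2) * a = 0 ->
  be * D + 3%:R * (c1 * c2 - 9%:R * c0 * c3) * a = 0 ->
  ga * D + 3%:R * (c2 ^+ 2 - 3%:R * c1 * c3) * a = 0 ->
  [/\ B ^+ 2 = 3%:R * A * Cc, Cc ^+ 2 = 3%:R * B * E & B * Cc - 9%:R * A * E + 9%:R = 0].
Proof.
move=> al be ga D c0 c1 c2 c3 a0 d0.
set e1 := (X in X = 0 -> _ -> _ -> _); set e2 := (X in _ -> X = 0 -> _ -> _).
set e3 := (X in _ -> _ -> X = 0 -> _) => P1 P2 P3.
have k0 : 3%:R * a ^+ 3 * (u1 * v2 - u2 * v1) ^+ 4 != 0.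
  by rewrite !mulf_neq0 ?expf_neq0 // pnatr_eq0.
have k_cancel X : 3%:R * a ^+ 3 * (u1 * v2 - u2 * v1) ^+ 4 * X = 0 -> X = 0.
  by move/eqP; rewrite mulf_eq0 (negbTE k0) => /eqP.
have sub0 (x y : C) : x - y = 0 -> x = y by move/eqP; rewrite subr_eq0 => /eqP.
split; [apply: sub0|apply: sub0|]; apply: k_cancel.
- transitivity (v2 ^+ 2 * e1 - v1 * v2 * e2 + v1 ^+ 2 * e3); last by rewrite P1 P2 P3; ring.
  by rewrite /e1 /e2 /e3 /D /al /be /ga /c0 /c1 /c2 /c3; ring.
- transitivity (u2 ^+ 2 * e1 - u1 * u2 * e2 + u1 ^+ 2 * e3); last by rewrite P1 P2 P3; ring.
  by rewrite /e1 /e2 /e3 /D /al /be /ga /c0 /c1 /c2 /c3; ring.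
- transitivity (- 2%:R * u2 * v2 * e1 + (u1 * v2 + u2 * v1) * e2 - 2%:R * u1 * v1 * e3).
    by rewrite /e1 /e2 /e3 /D /al /be /ga /c0 /c1 /c2 /c3; ring.
  by rewrite P1 P2 P3; ring.
Qed.
End CubicPart.

(* The only solutions of B^2 = 3 A Cc, Cc^2 = 3 B E, B Cc - 9 A E + 9 = 0 have
   B = Cc = 0 and A E = 1: then B Cc (B Cc - 9 A E) vanishes, forcing B Cc = 0. *)
Lemma cubic_invariant_system (C : numDomainType) (A B Cc E : C) :
  B ^+ 2 = 3%:R * A * Cc -> Cc ^+ 2 = 3%:R * B * E -> B * Cc - 9%:R * A * E + 9%:R = 0 ->
  [/\ B = 0, Cc = 0 & A * E = 1].
Proof.
move=> eB eC eBC.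
have BC0 : B * Cc = 0.
  have : B * Cc * (B * Cc - 9%:R * A * E) = 0.
    transitivity (Cc ^+ 2 * (B ^+ 2 - 3%:R * A * Cc) + 3%:R * A * Cc * (Cc ^+ 2 - 3%:R * B * E)).
      by ring.
    by rewrite eB eC !subrr !mulr0 addr0.
  have -> : B * Cc - 9%:R * A * E = - 9%:R by apply/eqP; rewrite -subr_eq0 -eBC; apply/eqP; ring.
  by move/eqP; rewrite mulf_eq0 oppr_eq0 pnatr_eq0 orbF => /eqP.
have [B0 C0] : B = 0 /\ Cc = 0.
  move/eqP: BC0; rewrite mulf_eq0 => /orP[/eqP B0|/eqP C0].
    by split => //; apply/eqP; rewrite -sqrf_eq0 eC B0 mulr0 mul0r.
  by split => //; apply/eqP; rewrite -sqrf_eq0 eB C0 mulr0.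
split => //; have : 9%:R * (1 - A * E) = 0 by rewrite -eBC B0 C0; ring.
by move/eqP; rewrite mulf_eq0 pnatr_eq0 /= subr_eq0 => /eqP.
Qed.

(* Algebraic heart of sufficiency: with a = f_333, (al, be, ga) = (f_113, f_123,
   f_223) and (c0, .., c3) = (f_111, f_112, f_122, f_222), the conditions force
   f = a (x_3^3 - 3 x_3 U V + U^3 + V^3) for two linear forms U, V in x_1, x_2. *)
Lemma reducible_normal_form (C : numClosedFieldType) (a al be ga c0 c1 c2 c3 : C) :
  a != 0 -> 4%:R * al * ga - be ^+ 2 != 0 ->
  al * (4%:R * al * ga - be ^+ 2) + 3%:R * (c1 ^+ 2 - 3%:R * c0 * c2) * a = 0 ->
  be * (4%:R * al * ga - be ^+ 2) + 3%:R * (c1 * c2 - 9%:R * c0 * c3) * a = 0 ->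
  ga * (4%:R * al * ga - be ^+ 2) + 3%:R * (c2 ^+ 2 - 3%:R * c1 * c3) * a = 0 ->
  exists U1 U2 V1 V2 : C,
   [/\ al = - 3%:R * a * (U1 * V1), be = - 3%:R * a * (U1 * V2 + U2 * V1),
       ga = - 3%:R * a * (U2 * V2) & [/\ c0 = a * (U1 ^+ 3 + V1 ^+ 3),
       c1 = 3%:R * a * (U1 ^+ 2 * U2 + V1 ^+ 2 * V2),
       c2 = 3%:R * a * (U1 * U2 ^+ 2 + V1 * V2 ^+ 2) &
       c3 = a * (U2 ^+ 3 + V2 ^+ 3)]].
Proof.
move=> a0 disc0 P1 P2 P3.
have [u1 [u2 [v1 [v2 [eal ebe ega d0]]]]] := quadratic_part_split a0 disc0.
have [A [B [Cc [E [e0 e1 e2 e3]]]]] := binary_cubic_in_basis c0 c1 c2 c3 a0 d0.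
subst al be ga c0 c1 c2 c3.
have [eB eC eBC] := conditions_in_basis a0 d0 P1 P2 P3.
have [B0 C0 AE1] := cubic_invariant_system eB eC eBC; subst B Cc.
have A0 : A != 0 by apply: contra_eq_neq AE1 => ->; rewrite mul0r eq_sym oner_eq0.
pose t := 3.-root A.
have t3 : t ^+ 3 = A by rewrite rootCK.
have t0 : t != 0 by rewrite rootC_eq0.
have E_t : E = (t ^+ 3)^-1 by rewrite t3 -{1}(mulKf A0 E) AE1 mulr1.
exists (t * u1), (t * u2), (v1 / t), (v2 / t).
by rewrite E_t -t3; split; [field|field|field|split; field].
Qed.

Definition vec3 (T : Type) (x y z : T) (j : 'I_3) : T := nth x [:: x; y; z] j.

(* Sufficiency, explicitly: with U = U1 x_1 + U2 x_2, V = V1 x_1 + V2 x_2 and w a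
   primitive cube root of unity,
     a (x_3^3 - 3 x_3 U V + U^3 + V^3)
       = a (x_3 + U + V) (x_3 + w U + w^2 V) (x_3 + w^2 U + w V),
   where w U + w^2 V = m + s n and w^2 U + w V = m - s n for
   m = -(U + V)/2, n = (U - V)/2 and s^2 = -3. *)
Lemma cubic_normal_form_reducible (C : numClosedFieldType) (f : {mpoly C[3]})
    (a U1 U2 V1 V2 : C) :
  f \is 3.-homog -> cf3 f i3 i3 i3 = a -> cf3 f i1 i3 i3 = 0 -> cf3 f i2 i3 i3 = 0 ->
  [/\ cf3 f i1 i1 i3 = - 3%:R * a * (U1 * V1),
      cf3 f i1 i2 i3 = - 3%:R * a * (U1 * V2 + U2 * V1) &
      cf3 f i2 i2 i3 = - 3%:R * a * (U2 * V2)] ->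
  [/\ cf3 f i1 i1 i1 = a * (U1 ^+ 3 + V1 ^+ 3),
      cf3 f i1 i1 i2 = 3%:R * a * (U1 ^+ 2 * U2 + V1 ^+ 2 * V2),
      cf3 f i1 i2 i2 = 3%:R * a * (U1 * U2 ^+ 2 + V1 * V2 ^+ 2) &
      cf3 f i2 i2 i2 = a * (U2 ^+ 3 + V2 ^+ 3)] ->
  completely_reducible f.
Proof.
move=> f_homog f333 f133 f233 [f113 f123 f223] [f111 f112 f122 f222].
pose s := sqrtC (-3 : C).
have s2 : s ^+ 2 = -3 by rewrite sqrtCK.
pose l := linear_form (vec3 (a * (U1 + V1)) (a * (U2 + V2)) a).
pose m := linear_form (vec3 (- (U1 + V1) / 2%:R) (- (U2 + V2) / 2%:R) 1).
pose n := linear_form (vec3 ((U1 - V1) / 2%:R) ((U2 - V2) / 2%:R) 0).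
exists l, (m + s *: n), (m - s *: n).
split; rewrite ?rpredD ?rpredB ?rpredN ?rpredZ ?linear_form_homog //.
have -> : l * (m + s *: n) * (m - s *: n) = l * m * m - s ^+ 2 *: (l * n * n).
  by rewrite -!mul_mpolyC rmorphXn /=; ring.
apply/mpolyP => M; rewrite mcoeffB mcoeffZ !mcoeff_linear_form_mul3 s2.
have [/eqP M_deg|M_deg] := boolP (mdeg M == 3%N); last first.
  by rewrite !cubic_coef_ndeg // (dhomog_nemf_coeff f_homog) ?mulr0 ?subr0.
have n2 : 2%:R != 0 :> C by rewrite pnatr_eq0.
move: M M_deg; apply: cubic_mnm_ind;
  rewrite !cubic_coefE !cubic_mnmE !sum_ord3 /= ?mulr1 ?mulr0 ?addr0 ?add0r;
  rewrite -?[f@_(_)]/(cf3 f _ _ _) ?f333 ?f133 ?f233 ?f113 ?f123 ?f223 ?f111 ?f112 ?f122 ?f222;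
  by rewrite /vec3 /=; field.
Qed.

Theorem lemma10p2 (R : realType) (f : {mpoly R[i][3]}) :
  ternary_cubic_form f ->
  cf3 f i3 i3 i3 != 0 ->
  cf3 (hessian3 f) i3 i3 i3 != 0 ->
  cf3 f i1 i3 i3 = 0 -> cf3 f i2 i3 i3 = 0 ->
  completely_reducible f <->
  [/\ cf3 f i1 i1 i3 * (4%:R * cf3 f i1 i1 i3 * cf3 f i2 i2 i3 - cf3 f i1 i2 i3 ^+ 2)
        + 3%:R * (cf3 f i1 i1 i2 ^+ 2 - 3%:R * cf3 f i1 i1 i1 * cf3 f i1 i2 i2)
          * cf3 f i3 i3 i3 = 0,
      cf3 f i1 i2 i3 * (4%:R * cf3 f i1 i1 i3 * cf3 f i2 i2 i3 - cf3 f i1 i2 i3 ^+ 2)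
        + 3%:R * (cf3 f i1 i1 i2 * cf3 f i1 i2 i2 - 9%:R * cf3 f i1 i1 i1 * cf3 f i2 i2 i2)
          * cf3 f i3 i3 i3 = 0 &
      cf3 f i2 i2 i3 * (4%:R * cf3 f i1 i1 i3 * cf3 f i2 i2 i3 - cf3 f i1 i2 i3 ^+ 2)
        + 3%:R * (cf3 f i1 i2 i2 ^+ 2 - 3%:R * cf3 f i1 i1 i2 * cf3 f i2 i2 i2)
          * cf3 f i3 i3 i3 = 0].
Proof.
rewrite /ternary_cubic_form => f_homog f333 hess333 f133 f233.
have disc0 : 4%:R * cf3 f i1 i1 i3 * cf3 f i2 i2 i3 - cf3 f i1 i2 i3 ^+ 2 != 0.
  by move: hess333; rewrite hessian333 // !mulf_eq0 !negb_or => /andP[].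
split.
  case=> l1 [l2 [l3 [/homog1_linear_form[u ->] /homog1_linear_form[v ->]
    /homog1_linear_form[w ->] f_eq]]].
  by subst f; apply: product_reducibility_conditions.
case=> P1 P2 P3.
have [U1 [U2 [V1 [V2 [f113 f123 f223 f_cubic]]]]] :=
  reducible_normal_form f333 disc0 P1 P2 P3.
exact: (cubic_normal_form_reducible f_homog erefl f133 f233 (And3 f113 f123 f223) f_cubic).
Qed.
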